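(* Let $b^2>a^2>0$, $\theta\in[0,1]$, and let $u$ solve $$u_{tt}-a^2\Delta u-(b^2-a^2)\nabla\operatorname{div}u+(-\Delta)^{\theta}u_t=0\ \text{ on }(0,\infty)\times\mathbb{R}^3,\qquad (u,u_t)(0,\cdot)=(u_0,u_1).$$ Let $\hat u(t,\xi)$ be its partial Fourier transform in $x$ and $$E_{\rm pha}(\hat u)(t,\xi):=|\hat u_t(t,\xi)|^2+a^2|\xi|^2|\hat u(t,\xi)|^2+(b^2-a^2)|\xi\cdot\hat u(t,\xi)|^2 .$$ Then for a sufficiently small constant $\varepsilon>0$ there is $c>0$ such that for all $t\ge0$ $$E_{\rm pha}(\hat u)(t,\xi)\lesssim\begin{cases}e^{-c|\xi|^{2\max\{1-\theta;\theta\}}t}E_{\rm pha}(\hat u)(0,\xi)&\text{if }|\xi|<\varepsilon,\\ e^{-ct}E_{\rm pha}(\hat u)(0,\xi)&\text{if }|\xi|\ge\varepsilon.\end{cases}$$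
   Context: $(-\Delta)^\theta$ is the Fourier multiplier with symbol $|\xi|^{2\theta}$; $\xi\cdot\hat u$ is the (bilinear) inner product in $\mathbb{C}^3$. $\lesssim$ hides a constant independent of $t,\xi$ and data. *)

From Stdlib Require Import Reals.
From Coquelicot Require Import Coquelicot.
Open Scope R_scope.

(* Vectors of R^3 / C^3 are represented as functions on nat; only the
   indices 0, 1, 2 are used. *)

Definition xnorm (xi : nat -> R) : R :=
  sqrt (xi 0%nat ^ 2 + xi 1%nat ^ 2 + xi 2%nat ^ 2).

Definition dotc (xi : nat -> R) (w : nat -> C) : C :=
  Cplus (Cplus (Cmult (RtoC (xi 0%nat)) (w 0%nat))
               (Cmult (RtoC (xi 1%nat)) (w 1%nat)))
        (Cmult (RtoC (xi 2%nat)) (w 2%nat)).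

Definition csq (w : nat -> C) : R :=
  Cmod (w 0%nat) ^ 2 + Cmod (w 1%nat) ^ 2 + Cmod (w 2%nat) ^ 2.

(* real power x^y for x >= 0, with the conventions 0^0 = 1 and 0^y = 0 for y > 0
   (Stdlib's Rpower gives Rpower 0 y = 1, which is not the symbol |xi|^(2 theta)). *)
Definition rpow (x y : R) : R :=
  if Req_EM_T x 0 then (if Req_EM_T y 0 then 1 else 0) else Rpower x y.

Definition Epha (a b : R) (xi : nat -> R) (w v : nat -> C) : R :=
  csq v + a ^ 2 * xnorm xi ^ 2 * csq w + (b ^ 2 - a ^ 2) * Cmod (dotc xi w) ^ 2.

(* The partial Fourier transform (in x) of the system
     u_tt - a^2 Lap u - (b^2-a^2) grad div u + (-Lap)^theta u_t = 0
   at frequency xi: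
     w'' + a^2 |xi|^2 w + (b^2 - a^2) xi (xi . w) + |xi|^(2 theta) w' = 0  on (0,oo),
   with w = hat u(.,xi), v = hat u_t(.,xi) = w', and (w, w') continuous up to t = 0. *)
Definition fourier_solution (a b theta : R) (xi : nat -> R)
    (w v : R -> nat -> C) : Prop :=
  forall j : nat, (j < 3)%nat ->
    (forall t, 0 < t -> is_derive (fun s => w s j) t (v t j)) /\
    (forall t, 0 < t ->
       is_derive (fun s => v s j) t
         (Cminus
           (Cminus
             (Copp (Cmult (RtoC (a ^ 2 * xnorm xi ^ 2)) (w t j)))
             (Cmult (RtoC ((b ^ 2 - a ^ 2) * xi j)) (dotc xi (w t))))
           (Cmult (RtoC (rpow (xnorm xi) (2 * theta))) (v t j)))) /\
    filterlim (fun s => w s j) (at_right 0) (locally (w 0 j)) /\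
    filterlim (fun s => v s j) (at_right 0) (locally (v 0 j)).

From Stdlib Require Import Reals Lra Lia Psatz.
From Coquelicot Require Import Coquelicot.
Open Scope R_scope.

(* The system has real coefficients, so the real and imaginary parts of the
   solution each solve the real damped system x'' + m x + B xi (xi.x) + d x' = 0
   with m = a^2 |xi|^2, B = b^2 - a^2, d = |xi|^(2 theta), and E_pha is the sum of
   their energies E = |x'|^2 + m |x|^2 + B (xi.x)^2.  The energy only satisfies
   E' = -2 d |x'|^2, but the perturbed functional L = E + al (x'.x), with
   0 <= al <= d and al d <= m, satisfies E/2 <= L <= 3E/2 and L' <= -(al/3) L, so
   E(t) <= 3 exp(-al t/3) E(0).  The weight al = d m / (d^2 + m) is comparable to
   min(d, m/d), i.e. to min(|xi|^(2 theta), |xi|^(2 - 2 theta)): at least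
   |xi|^(2 max(theta, 1 - theta)) for |xi| < 1 and at least eps^2 for |xi| >= eps. *)

Lemma filterlim_Rplus_fun {T} (F : (T -> Prop) -> Prop) {FF : Filter F}
    (f g : T -> R) (lf lg : R) :
  filterlim f F (locally lf) -> filterlim g F (locally lg) ->
  filterlim (fun s => f s + g s) F (locally (lf + lg)).
Proof.
  intros Hf Hg.
  exact (filterlim_comp_2 f g Rplus Hf Hg (@filterlim_plus R_AbsRing R_NormedModule lf lg)).
Qed.

Lemma filterlim_Rmult_fun {T} (F : (T -> Prop) -> Prop) {FF : Filter F}
    (f g : T -> R) (lf lg : R) :
  filterlim f F (locally lf) -> filterlim g F (locally lg) ->
  filterlim (fun s => f s * g s) F (locally (lf * lg)).
Proof.
  intros Hf Hg.
  exact (filterlim_comp_2 f g Rmult Hf Hg (@filterlim_mult R_AbsRing lf lg)).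
Qed.

Lemma filterlim_pow_fun {T} (F : (T -> Prop) -> Prop) {FF : Filter F}
    (f : T -> R) (l : R) (n : nat) :
  filterlim f F (locally l) -> filterlim (fun s => f s ^ n) F (locally (l ^ n)).
Proof.
  intros Hf. induction n as [|n IH]; simpl.
  - apply filterlim_const.
  - exact (filterlim_Rmult_fun F f _ l _ Hf IH).
Qed.

Lemma is_derive_eq (f : R -> R) (t l l' : R) : is_derive f t l -> l = l' -> is_derive f t l'.
Proof. intros H <-; exact H. Qed.

Lemma gronwall_exp_decay (L dL : R -> R) (k : R) :
  (forall t, 0 < t -> is_derive L t (dL t)) ->
  (forall t, 0 < t -> k * L t + dL t <= 0) ->
  filterlim L (at_right 0) (locally (L 0)) ->
  forall t, 0 <= t -> L t <= exp (- k * t) * L 0.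
Proof.
  intros HL Hdiss HL0 t Ht.
  destruct (Req_dec t 0) as [->|Ht0].
  { rewrite Rmult_0_r, exp_0. lra. }
  set (g := fun s => exp (k * s) * L s).
  assert (Hg : forall s, 0 < s -> is_derive g s (exp (k * s) * (k * L s + dL s))).
  { intros s Hs. unfold g.
    replace (exp (k * s) * (k * L s + dL s))
      with (k * exp (k * s) * L s + exp (k * s) * dL s) by ring.
    apply (is_derive_mult (fun s => exp (k * s)) L); [|exact (HL s Hs)|intros; apply Rmult_comm].
    auto_derive; [exact I | ring]. }
  assert (Hg_noninc : forall s, 0 < s < t -> g t <= g s).
  { intros s Hs.
    destruct (MVT_gen g s t (fun s => exp (k * s) * (k * L s + dL s))) as [c [Hc Hmvt]].
    - intros y Hy. apply Hg. rewrite Rmin_left in Hy; lra.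
    - intros y Hy. rewrite Rmin_left in Hy by lra.
      apply continuity_pt_filterlim, (ex_derive_continuous g).
      eexists; apply Hg; lra.
    - rewrite Rmin_left, Rmax_right in Hc by lra.
      assert (exp (k * c) * (k * L c + dL c) <= 0)
        by (apply Rmult_le_0_l; [left; apply exp_pos | apply Hdiss; lra]).
      assert (exp (k * c) * (k * L c + dL c) * (t - s) <= 0) by (apply Rmult_le_0_r; lra).
      lra. }
  assert (Hg0 : filterlim g (at_right 0) (locally (L 0))).
  { replace (L 0) with (exp (k * 0) * L 0) by (rewrite Rmult_0_r, exp_0; ring).
    apply (filterlim_Rmult_fun _ _ L); [|exact HL0].
    apply (filterlim_filter_le_1 (F := locally 0)); [apply filter_le_within|].
    apply continuous_exp_comp, (ex_derive_continuous (fun s => k * s)).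
    auto_derive; exact I. }
  assert (Hgt : Rbar_le (g t) (L 0)).
  { apply (filterlim_le (F := at_right 0) (fun _ => g t) g); [|apply filterlim_const|exact Hg0].
    exists (mkposreal t ltac:(lra)). intros s Hs Hs0. apply Hg_noninc. split; [exact Hs0|].
    apply Rabs_lt_between in Hs. unfold minus, plus, opp in Hs. simpl in Hs. lra. }
  simpl in Hgt. unfold g in Hgt.
  replace (L t) with (exp (- k * t) * (exp (k * t) * L t))
    by (rewrite <- Rmult_assoc, <- exp_plus, Ropp_mult_distr_l_reverse, Rplus_opp_l, exp_0;
        ring).
  apply Rmult_le_compat_l; [left; apply exp_pos | exact Hgt].
Qed.

Lemma exp_le (x y : R) : x <= y -> exp x <= exp y.
Proof. intros [Hxy | ->]; [left; apply exp_increasing, Hxy | apply Rle_refl]. Qed.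

Lemma Rpower_2 (r : R) : 0 < r -> Rpower r 2 = r ^ 2.
Proof. intros Hr. replace 2 with (INR 2) by (simpl; ring). apply Rpower_pow, Hr. Qed.

Lemma Rpower_le_base_lt_1 (r s s' : R) : 0 < r < 1 -> s <= s' -> Rpower r s' <= Rpower r s.
Proof.
  intros Hr Hs. unfold Rpower.
  assert (ln r < 0) by (rewrite <- ln_1; apply ln_increasing; lra).
  apply exp_le. nra.
Qed.

Lemma Rpower_ge_sq (eps r s : R) : 0 < eps <= 1 -> eps <= r -> 0 <= s <= 2 ->
  eps ^ 2 <= Rpower r s.
Proof.
  intros He Hr Hs.
  destruct (Rlt_or_le r 1) as [H1|H1].
  - apply Rle_trans with (Rpower r 2); [rewrite Rpower_2 by lra; nra|].
    apply Rpower_le_base_lt_1; lra.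
  - apply Rle_trans with (Rpower r 0); [rewrite Rpower_O by lra; nra|].
    apply Rle_Rpower; lra.
Qed.

Definition dot3 (x y : nat -> R) : R :=
  x 0%nat * y 0%nat + x 1%nat * y 1%nat + x 2%nat * y 2%nat.

Lemma dot3_self_nonneg (x : nat -> R) : 0 <= dot3 x x.
Proof. unfold dot3; nra. Qed.

Lemma dot3_cross_le (al : R) (x u : nat -> R) :
  Rabs (2 * al * dot3 u x) <= dot3 u u + al ^ 2 * dot3 x x.
Proof.
  unfold dot3; apply Rabs_le; split.
  - assert (0 <= (u 0%nat + al * x 0%nat) ^ 2 + (u 1%nat + al * x 1%nat) ^ 2
                 + (u 2%nat + al * x 2%nat) ^ 2)
      by (repeat apply Rplus_le_le_0_compat; apply pow2_ge_0).
    nra.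
  - assert (0 <= (u 0%nat - al * x 0%nat) ^ 2 + (u 1%nat - al * x 1%nat) ^ 2
                 + (u 2%nat - al * x 2%nat) ^ 2)
      by (repeat apply Rplus_le_le_0_compat; apply pow2_ge_0).
    nra.
Qed.

Definition energy (m B : R) (xi x u : nat -> R) : R :=
  dot3 u u + m * dot3 x x + B * dot3 xi x ^ 2.

Lemma energy_nonneg (m B : R) (xi x u : nat -> R) : 0 <= m -> 0 <= B ->
  0 <= energy m B xi x u.
Proof.
  intros Hm HB. unfold energy.
  pose proof (dot3_self_nonneg x). pose proof (dot3_self_nonneg u).
  assert (0 <= B * dot3 xi x ^ 2) by (apply Rmult_le_pos; [exact HB | apply pow2_ge_0]).
  nra.
Qed.

Definition lyap (al m B : R) (xi x u : nat -> R) : R :=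
  energy m B xi x u + al * dot3 u x.

Definition lyap_deriv (al m B d : R) (xi x u : nat -> R) : R :=
  - (2 * d - al) * dot3 u u - al * (m * dot3 x x + B * dot3 xi x ^ 2)
  - al * d * dot3 u x.

Lemma lyap_energy_equiv (al m B : R) (xi x u : nat -> R) :
  0 <= B -> 0 <= al -> al ^ 2 <= m ->
  energy m B xi x u / 2 <= lyap al m B xi x u <= 3 * energy m B xi x u / 2.
Proof.
  intros HB Hal Hm.
  pose proof (dot3_cross_le al x u) as Hcross.
  pose proof (dot3_self_nonneg x) as HX.
  assert (al ^ 2 * dot3 x x <= m * dot3 x x) by nra.
  assert (0 <= B * dot3 xi x ^ 2) by nra.
  unfold lyap, energy. apply Rabs_le_between in Hcross. lra.
Qed.

Lemma lyap_dissipation (al m B d : R) (xi x u : nat -> R) :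
  0 <= B -> 0 <= al <= d -> al * d <= m ->
  al / 3 * lyap al m B xi x u + lyap_deriv al m B d xi x u <= 0.
Proof.
  intros HB [Hal Hald] Hm.
  pose proof (dot3_cross_le al x u) as Hcross.
  apply Rabs_le_between in Hcross.
  pose proof (dot3_self_nonneg x) as HX.
  pose proof (dot3_self_nonneg u) as HU.
  assert (HBq : 0 <= B * dot3 xi x ^ 2) by nra.
  assert (Halm : al * (al * d) <= al * m) by (apply Rmult_le_compat_l; lra).
  set (c := d - al / 3).
  assert (Hc0 : 0 <= c) by (unfold c; lra).
  (* Young's inequality for the cross term; the al^2 |x|^2 it produces is paid by al d <= m *)
  assert (Hc : - c * al * dot3 u x <= c * (dot3 u u + al ^ 2 * dot3 x x) / 2).
  { destruct Hcross as [Hcross _]. apply (Rmult_le_compat_l c) in Hcross; lra. }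
  assert (Hpot : c * al ^ 2 * dot3 x x <= al * m * dot3 x x).
  { assert (c * al ^ 2 <= al * (al * d)) by (unfold c; nra).
    apply Rmult_le_compat_r; [exact HX | lra]. }
  assert (0 <= al * m * dot3 x x) by (apply Rmult_le_pos; [nra | exact HX]).
  unfold lyap, lyap_deriv, energy.
  set (U := dot3 u u) in *; set (X := dot3 x x) in *; set (P := dot3 u x) in *;
    set (Q := B * dot3 xi x ^ 2) in *.
  replace (al / 3 * (U + m * X + Q + al * P) + (- (2 * d - al) * U - al * (m * X + Q) - al * d * P))
    with ((4 * al / 3 - 2 * d) * U - 2 * al / 3 * (m * X + Q) - c * al * P) by (unfold c; field).
  assert (0 <= al * Q) by (apply Rmult_le_pos; lra).
  assert ((4 * al / 3 - 2 * d + c / 2) * U <= 0) by (apply Rmult_le_0_r; [unfold c; lra | exact HU]).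
  lra.
Qed.

Lemma is_derive_dot3 (f g : R -> nat -> R) (df dg : nat -> R) (t : R) :
  (forall j, (j < 3)%nat -> is_derive (fun s => f s j) t (df j)) ->
  (forall j, (j < 3)%nat -> is_derive (fun s => g s j) t (dg j)) ->
  is_derive (fun s => dot3 (f s) (g s)) t (dot3 df (g t) + dot3 (f t) dg).
Proof.
  intros Hf Hg.
  assert (Hprod : forall j, (j < 3)%nat ->
            is_derive (fun s => f s j * g s j) t (df j * g t j + f t j * dg j)).
  { intros j Hj. apply (is_derive_mult (fun s => f s j) (fun s => g s j)); auto.
    intros; apply Rmult_comm. }
  eapply is_derive_eq.
  - exact (is_derive_plus _ _ _ _ _
             (is_derive_plus _ _ _ _ _ (Hprod 0%nat ltac:(lia)) (Hprod 1%nat ltac:(lia)))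
             (Hprod 2%nat ltac:(lia))).
  - unfold plus, dot3; simpl. ring.
Qed.

Definition damped_solution (m B d : R) (xi : nat -> R) (x u : R -> nat -> R) : Prop :=
  forall j : nat, (j < 3)%nat ->
    (forall t, 0 < t -> is_derive (fun s => x s j) t (u t j)) /\
    (forall t, 0 < t ->
       is_derive (fun s => u s j) t (- m * x t j - B * xi j * dot3 xi (x t) - d * u t j)) /\
    filterlim (fun s => x s j) (at_right 0) (locally (x 0 j)) /\
    filterlim (fun s => u s j) (at_right 0) (locally (u 0 j)).

Section DampedSystem.

Variables (m B d : R) (xi : nat -> R) (x u : R -> nat -> R).
Hypothesis Hsol : damped_solution m B d xi x u.

Lemma is_derive_lyap (al t : R) : 0 < t ->
  is_derive (fun s => lyap al m B xi (x s) (u s)) t (lyap_deriv al m B d xi (x t) (u t)).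
Proof.
  intros Ht.
  set (du := fun j => - m * x t j - B * xi j * dot3 xi (x t) - d * u t j).
  assert (Dx : forall j, (j < 3)%nat -> is_derive (fun s => x s j) t (u t j))
    by (intros j Hj; apply (Hsol j Hj), Ht).
  assert (Du : forall j, (j < 3)%nat -> is_derive (fun s => u s j) t (du j))
    by (intros j Hj; apply (Hsol j Hj), Ht).
  assert (Dxi : forall j, (j < 3)%nat -> is_derive (fun _ => xi j) t 0)
    by (intros; apply (is_derive_const (V := R_NormedModule))).
  pose proof (is_derive_dot3 _ _ _ _ t Du Du) as Duu.
  pose proof (is_derive_dot3 _ _ _ _ t Dx Dx) as Dxx.
  pose proof (is_derive_dot3 (fun _ => xi) _ _ _ t Dxi Dx) as Dq.
  pose proof (is_derive_dot3 _ _ _ _ t Du Dx) as Dux.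
  eapply is_derive_eq.
  - exact (is_derive_plus _ _ _ _ _
             (is_derive_plus _ _ _ _ _
                (is_derive_plus _ _ _ _ _ Duu (is_derive_scal _ _ m _ Dxx))
                (is_derive_scal _ _ B _ (is_derive_pow _ 2 _ _ Dq)))
             (is_derive_scal _ _ al _ Dux)).
  - unfold lyap_deriv, du, plus, dot3; simpl. ring.
Qed.

Lemma filterlim_lyap (al : R) :
  filterlim (fun s => lyap al m B xi (x s) (u s)) (at_right 0)
    (locally (lyap al m B xi (x 0) (u 0))).
Proof.
  destruct (Hsol 0%nat ltac:(lia)) as (_ & _ & Lx0 & Lu0).
  destruct (Hsol 1%nat ltac:(lia)) as (_ & _ & Lx1 & Lu1).
  destruct (Hsol 2%nat ltac:(lia)) as (_ & _ & Lx2 & Lu2).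
  pose proof (at_right_proper_filter 0).
  unfold lyap, energy, dot3.
  repeat first [ apply filterlim_Rplus_fun | apply filterlim_Rmult_fun
               | apply filterlim_pow_fun | apply filterlim_const | assumption
               | apply filter_filter ].
Qed.

Lemma lyap_decay (al : R) : 0 <= B -> 0 <= al <= d -> al * d <= m ->
  forall t, 0 <= t ->
  lyap al m B xi (x t) (u t) <= exp (- (al / 3) * t) * lyap al m B xi (x 0) (u 0).
Proof.
  intros HB Hal Hm.
  apply (gronwall_exp_decay (fun s => lyap al m B xi (x s) (u s))
           (fun s => lyap_deriv al m B d xi (x s) (u s)) (al / 3)).
  - exact (is_derive_lyap al).
  - intros s _. exact (lyap_dissipation al m B d xi (x s) (u s) HB Hal Hm).
  - exact (filterlim_lyap al).
Qed.

Lemma energy_decay (al : R) : 0 <= B -> 0 <= al <= d -> al * d <= m ->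
  forall t, 0 <= t ->
  energy m B xi (x t) (u t) <= 3 * exp (- (al / 3) * t) * energy m B xi (x 0) (u 0).
Proof.
  intros HB Hal Hm t Ht.
  assert (Hal2 : al ^ 2 <= m) by nra.
  destruct (lyap_energy_equiv al m B xi (x t) (u t) HB (proj1 Hal) Hal2) as [Ht_low _].
  destruct (lyap_energy_equiv al m B xi (x 0) (u 0) HB (proj1 Hal) Hal2) as [_ H0_up].
  pose proof (lyap_decay al HB Hal Hm t Ht) as Hdecay.
  pose proof (exp_pos (- (al / 3) * t)) as Hexp.
  assert (exp (- (al / 3) * t) * lyap al m B xi (x 0) (u 0)
          <= exp (- (al / 3) * t) * (3 * energy m B xi (x 0) (u 0) / 2))
    by (apply Rmult_le_compat_l; lra).
  lra.
Qed.

End DampedSystem.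

Section RealLinearPart.

Variable p : C -> R.
Hypothesis Hp : is_linear (U := C_R_NormedModule) (V := R_NormedModule) p.

Lemma linear_Cplus (z1 z2 : C) : p (Cplus z1 z2) = p z1 + p z2.
Proof. exact (linear_plus (U := C_R_NormedModule) p Hp z1 z2). Qed.

Lemma linear_Copp (z : C) : p (Copp z) = - p z.
Proof. exact (linear_opp (U := C_R_NormedModule) p z Hp). Qed.

Lemma linear_RtoC_mult (r : R) (z : C) : p (Cmult (RtoC r) z) = r * p z.
Proof.
  replace (Cmult (RtoC r) z) with (scal (V := C_R_NormedModule) r z)
    by (destruct z as [z1 z2]; apply injective_projections;
        simpl; unfold scal, mult; simpl; unfold mult; simpl; ring).
  exact (linear_scal (U := C_R_NormedModule) p Hp r z).
Qed.

Lemma linear_dotc (xi : nat -> R) (w : nat -> C) :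
  p (dotc xi w) = dot3 xi (fun j => p (w j)).
Proof. unfold dotc, dot3. rewrite !linear_Cplus, !linear_RtoC_mult. reflexivity. Qed.

Lemma is_derive_linear_comp (f : R -> C) (t : R) (l : C) :
  is_derive f t l -> is_derive (fun s => p (f s)) t (p l).
Proof.
  intros Hf. unfold is_derive in *.
  apply (filterdiff_ext_lin _ (fun y : R => p (scal y l))).
  - apply (filterdiff_comp' f p t _ p Hf), filterdiff_linear, Hp.
  - intros y. exact (linear_scal (U := C_R_NormedModule) p Hp y l).
Qed.

Lemma filterlim_linear_comp (F : (R -> Prop) -> Prop) {FF : Filter F} (f : R -> C) (l : C) :
  filterlim f F (locally l) -> filterlim (fun s => p (f s)) F (locally (p l)).
Proof.
  intros Hf. apply (filterlim_comp _ _ _ f p F (locally l) _ Hf).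
  exact (linear_cont (U := C_R_NormedModule) (V := R_NormedModule) p l Hp).
Qed.

Lemma fourier_solution_linear_comp (a b theta : R) (xi : nat -> R) (w v : R -> nat -> C) :
  fourier_solution a b theta xi w v ->
  damped_solution (a ^ 2 * xnorm xi ^ 2) (b ^ 2 - a ^ 2) (rpow (xnorm xi) (2 * theta)) xi
    (fun s j => p (w s j)) (fun s j => p (v s j)).
Proof.
  intros Hsol j Hj. destruct (Hsol j Hj) as (Dw & Dv & Lw & Lv).
  split; [|split; [|split]].
  - intros t Ht. exact (is_derive_linear_comp _ _ _ (Dw t Ht)).
  - intros t Ht. eapply is_derive_eq; [exact (is_derive_linear_comp _ _ _ (Dv t Ht))|].
    unfold Cminus. rewrite !linear_Cplus, !linear_Copp, !linear_RtoC_mult, linear_dotc.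
    ring.
  - exact (filterlim_linear_comp _ _ _ Lw).
  - exact (filterlim_linear_comp _ _ _ Lv).
Qed.

End RealLinearPart.

Lemma Epha_Re_Im (a b : R) (xi : nat -> R) (w v : nat -> C) :
  Epha a b xi w v =
  energy (a ^ 2 * xnorm xi ^ 2) (b ^ 2 - a ^ 2) xi (fun j => Re (w j)) (fun j => Re (v j))
  + energy (a ^ 2 * xnorm xi ^ 2) (b ^ 2 - a ^ 2) xi (fun j => Im (w j)) (fun j => Im (v j)).
Proof. unfold Epha, csq, energy, dot3. rewrite !Cmod2_alt. unfold dotc, Re, Im. simpl. ring. Qed.

Lemma Epha_nonneg (a b : R) (xi : nat -> R) (w v : nat -> C) : a ^ 2 < b ^ 2 ->
  0 <= Epha a b xi w v.
Proof.
  intros Hab. rewrite Epha_Re_Im.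
  assert (0 <= a ^ 2 * xnorm xi ^ 2) by (apply Rmult_le_pos; apply pow2_ge_0).
  apply Rplus_le_le_0_compat; apply energy_nonneg; lra.
Qed.

Lemma Epha_decay (a b theta al : R) (xi : nat -> R) (w v : R -> nat -> C) :
  a ^ 2 < b ^ 2 -> fourier_solution a b theta xi w v ->
  0 <= al <= rpow (xnorm xi) (2 * theta) ->
  al * rpow (xnorm xi) (2 * theta) <= a ^ 2 * xnorm xi ^ 2 ->
  forall t, 0 <= t ->
  Epha a b xi (w t) (v t) <= 3 * exp (- (al / 3) * t) * Epha a b xi (w 0) (v 0).
Proof.
  intros Hab Hsol Hal Hm t Ht.
  assert (HB : 0 <= b ^ 2 - a ^ 2) by lra.
  pose proof (energy_decay _ _ _ _ _ _
                (fourier_solution_linear_comp Re is_linear_fst _ _ _ _ _ _ Hsol)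
                al HB Hal Hm t Ht) as HRe.
  pose proof (energy_decay _ _ _ _ _ _
                (fourier_solution_linear_comp Im is_linear_snd _ _ _ _ _ _ Hsol)
                al HB Hal Hm t Ht) as HIm.
  rewrite !Epha_Re_Im, Rmult_plus_distr_l. apply Rplus_le_compat; [exact HRe | exact HIm].
Qed.

Definition lyap_weight (d m : R) : R := d * m / (d ^ 2 + m).

Lemma lyap_weight_zero (d m : R) : 0 <= d -> 0 <= m -> d ^ 2 + m = 0 ->
  d = 0 /\ lyap_weight d m = 0.
Proof.
  intros Hd Hm Hz. assert (d = 0) by nra. split; [assumption|].
  unfold lyap_weight. rewrite Hz. unfold Rdiv. rewrite Rinv_0. ring.
Qed.

Lemma lyap_weight_eq (d m : R) : d ^ 2 + m <> 0 ->
  lyap_weight d m * (d ^ 2 + m) = d * m.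
Proof. intros Hz. unfold lyap_weight. field. exact Hz. Qed.

Lemma lyap_weight_bounds (d m : R) : 0 <= d -> 0 <= m ->
  0 <= lyap_weight d m <= d /\ lyap_weight d m * d <= m.
Proof.
  intros Hd Hm.
  destruct (Req_dec (d ^ 2 + m) 0) as [Hz|Hz].
  { destruct (lyap_weight_zero d m Hd Hm Hz) as [-> ->]. lra. }
  assert (Hden : 0 < d ^ 2 + m) by nra.
  pose proof (lyap_weight_eq d m Hz) as Hw.
  set (al := lyap_weight d m) in *.
  split; [split|].
  - apply (Rmult_le_reg_r (d ^ 2 + m)); nra.
  - apply (Rmult_le_reg_r (d ^ 2 + m)); nra.
  - apply (Rmult_le_reg_r (d ^ 2 + m)); nra.
Qed.

Lemma lyap_weight_ge (d m X : R) : 0 <= d -> 0 <= m -> 0 <= X <= d -> X * d <= m ->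
  X / 2 <= lyap_weight d m.
Proof.
  intros Hd Hm HX HXm.
  destruct (Req_dec (d ^ 2 + m) 0) as [Hz|Hz].
  { destruct (lyap_weight_zero d m Hd Hm Hz) as [Hd0 ->]. lra. }
  assert (Hden : 0 < d ^ 2 + m) by nra.
  pose proof (lyap_weight_eq d m Hz) as Hw.
  assert (Hkin : X * d ^ 2 <= m * d) by nra.
  assert (Hpot : X * m <= d * m) by nra.
  apply (Rmult_le_reg_r (d ^ 2 + m)); [exact Hden|]. rewrite Hw. lra.
Qed.

Lemma rpow_nonneg (r y : R) : 0 <= rpow r y.
Proof.
  unfold rpow. destruct (Req_EM_T r 0); [destruct (Req_EM_T y 0); lra|].
  left; apply exp_pos.
Qed.

Lemma rpow_pos_l (r y : R) : 0 < r -> rpow r y = Rpower r y.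
Proof. intros Hr. unfold rpow. destruct (Req_EM_T r 0); [lra | reflexivity]. Qed.

Lemma rpow_low_freq (r theta : R) : 0 <= r < 1 -> 0 <= theta <= 1 ->
  rpow r (2 * Rmax (1 - theta) theta) <= rpow r (2 * theta) /\
  rpow r (2 * Rmax (1 - theta) theta) * rpow r (2 * theta) <= r ^ 2.
Proof.
  intros Hr Hth.
  pose proof (Rmax_l (1 - theta) theta). pose proof (Rmax_r (1 - theta) theta).
  destruct (Req_dec r 0) as [->|Hr0].
  - assert (Hz : rpow 0 (2 * Rmax (1 - theta) theta) = 0).
    { unfold rpow. destruct (Req_EM_T 0 0); [|lra].
      destruct (Req_EM_T (2 * Rmax (1 - theta) theta) 0); [lra | reflexivity]. }
    rewrite Hz. pose proof (rpow_nonneg 0 (2 * theta)). nra.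
  - rewrite !rpow_pos_l by lra. split.
    + apply Rpower_le_base_lt_1; lra.
    + rewrite <- Rpower_plus, <- Rpower_2 by lra. apply Rpower_le_base_lt_1; lra.
Qed.

Lemma rpow_high_freq (eps r theta : R) : 0 < eps <= 1 -> eps <= r -> 0 <= theta <= 1 ->
  eps ^ 2 <= rpow r (2 * theta) /\ eps ^ 2 * rpow r (2 * theta) <= r ^ 2.
Proof.
  intros He Hr Hth. rewrite rpow_pos_l by lra. split.
  - apply Rpower_ge_sq; lra.
  - apply Rle_trans with (Rpower r (2 - 2 * theta) * Rpower r (2 * theta)).
    + apply Rmult_le_compat_r; [left; apply exp_pos | apply Rpower_ge_sq; lra].
    + rewrite <- Rpower_plus, <- Rpower_2 by lra. right; f_equal; ring.
Qed.

Lemma Epha_decay_rate (a b theta X : R) (xi : nat -> R) (w v : R -> nat -> C) :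
  0 < a ^ 2 -> a ^ 2 < b ^ 2 -> fourier_solution a b theta xi w v ->
  0 <= X <= rpow (xnorm xi) (2 * theta) ->
  X * rpow (xnorm xi) (2 * theta) <= xnorm xi ^ 2 ->
  forall t, 0 <= t ->
  Epha a b xi (w t) (v t)
  <= 3 * exp (- (Rmin 1 (a ^ 2) * X / 6) * t) * Epha a b xi (w 0) (v 0).
Proof.
  intros Ha Hab Hsol HX HXm t Ht.
  set (d := rpow (xnorm xi) (2 * theta)) in *.
  set (m := a ^ 2 * xnorm xi ^ 2).
  set (k := Rmin 1 (a ^ 2)).
  assert (Hk : 0 < k <= 1 /\ k <= a ^ 2)
    by (unfold k; split; [split; [apply Rmin_glb_lt | apply Rmin_l]; lra | apply Rmin_r]).
  assert (Hd : 0 <= d) by apply rpow_nonneg.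
  assert (Hm : 0 <= m) by (unfold m; nra).
  destruct (lyap_weight_bounds d m Hd Hm) as [Hal Halm].
  assert (Hrate : k * X / 2 <= lyap_weight d m).
  { apply lyap_weight_ge; [exact Hd | exact Hm | nra |].
    assert (k * X * d <= k * xnorm xi ^ 2) by nra.
    unfold m. nra. }
  eapply Rle_trans; [exact (Epha_decay a b theta _ xi w v Hab Hsol Hal Halm t Ht)|].
  apply Rmult_le_compat_r; [apply Epha_nonneg; lra|].
  apply Rmult_le_compat_l; [lra|].
  apply exp_le. nra.
Qed.

Theorem lemma3p1 (a b theta : R) :
  0 < a ^ 2 -> a ^ 2 < b ^ 2 -> 0 <= theta <= 1 ->
  exists eps0 : R, 0 < eps0 /\
  forall eps : R, 0 < eps <= eps0 ->
  exists c K : R, 0 < c /\ 0 < K /\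
  forall (xi : nat -> R) (w v : R -> nat -> C),
    fourier_solution a b theta xi w v ->
    forall t : R, 0 <= t ->
      (xnorm xi < eps ->
         Epha a b xi (w t) (v t) <=
         K * exp (- c * rpow (xnorm xi) (2 * Rmax (1 - theta) theta) * t)
           * Epha a b xi (w 0) (v 0)) /\
      (eps <= xnorm xi ->
         Epha a b xi (w t) (v t) <= K * exp (- c * t) * Epha a b xi (w 0) (v 0)).
Proof.
  intros Ha Hab Hth.
  exists 1. split; [lra|]. intros eps Heps.
  assert (He2 : 0 < eps ^ 2 <= 1) by (split; [apply pow_lt|]; nra).
  assert (Hk : 0 < Rmin 1 (a ^ 2)) by (apply Rmin_glb_lt; lra).
  exists (Rmin 1 (a ^ 2) * eps ^ 2 / 6), 3.
  split; [nra | split; [lra |]].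
  intros xi w v Hsol t Ht.
  pose proof (sqrt_pos (xi 0%nat ^ 2 + xi 1%nat ^ 2 + xi 2%nat ^ 2)) as Hr.
  fold (xnorm xi) in Hr.
  split.
  - intros Hsmall.
    destruct (rpow_low_freq (xnorm xi) theta) as [HTd HTm]; [lra | exact Hth |].
    pose proof (rpow_nonneg (xnorm xi) (2 * Rmax (1 - theta) theta)).
    pose proof (rpow_nonneg (xnorm xi) (2 * theta)).
    replace (- (Rmin 1 (a ^ 2) * eps ^ 2 / 6) * rpow (xnorm xi) (2 * Rmax (1 - theta) theta) * t)
      with (- (Rmin 1 (a ^ 2) * (eps ^ 2 * rpow (xnorm xi) (2 * Rmax (1 - theta) theta)) / 6) * t)
      by field.
    apply (Epha_decay_rate a b theta); [exact Ha | exact Hab | exact Hsol | nra | nra | exact Ht].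
  - intros Hlarge.
    destruct (rpow_high_freq eps (xnorm xi) theta) as [Hd Hdm]; [lra | exact Hlarge | exact Hth |].
    apply (Epha_decay_rate a b theta); [exact Ha | exact Hab | exact Hsol | nra | nra | exact Ht].
Qed.
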